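(* Let $G=D\rtimes M$ be a finite soluble group such that: (i) $D$ is an abelian Hall subgroup of $G$ of odd order and $M$ is a $\sigma$-nilpotent $M$-group; (ii) every element of $G$ induces a power automorphism on $D$; (iii) for every $i$, $O_{\sigma_i}(D)$ has a normal complement in a Hall $\sigma_i$-subgroup of $G$. If $A$ is a $\sigma$-primary $\sigma$-subnormal subgroup of $G$ with $A\le M$, then $D\le C_G(A)$.
   Context: $\sigma=\{\sigma_i\mid i\in I\}$ is a partition of the set of all primes. A group is $\sigma$-primary if it is a $\sigma_i$-group for some $i$, and $\sigma$-nilpotent if it is a direct product of $\sigma$-primary groups. A Hall $\sigma_i$-subgroup is a $\sigma_i$-subgroup whose index involves no prime of $\sigma_i$; $O_{\sigma_i}(D)$ is the largest normal $\sigma_i$-subgroup of $D$. $A_G$ is the core of $A$ in $G$. $A$ is $\sigma$-subnormal in $G$ if there is a chain $A=A_0\le\cdots\le A_n=G$ with, for each $i$, $A_{i-1}\trianglelefteq A_i$ or $A_i/(A_{i-1})_{A_i}$ $\sigma$-primary. An $M$-group is a group whose subgroup lattice is modular. A power automorphism is an automorphism mapping every subgroup to itself. *)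

From mathcomp Require Import all_boot all_fingroup all_solvable.
Set Implicit Arguments. Unset Strict Implicit. Unset Printing Implicit Defensive.
Local Open Scope group_scope.

(* A partition sigma = {sigma_i | i in I} of the primes is encoded by a map
   sigma : nat -> I sending each prime p to the index i with p in sigma_i.  *)
Definition sigma_i (I : eqType) (sigma : nat -> I) (i : I) : nat_pred :=
  [pred p | sigma p == i].

Section Defs.
Variables (I : eqType) (sigma : nat -> I) (gT : finGroupType).

Definition sigma_primary (H : {set gT}) : Prop :=
  exists i : I, (sigma_i sigma i).-group H.

Definition sigma_nilpotent (H : {set gT}) : Prop :=
  exists s : seq {group gT},
    \big[dprod/1]_(X <- s) (X : {set gT}) = H /\
    (forall X, X \in s -> sigma_primary X).

Definition sigma_step (X Y : {group gT}) : Prop :=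
  X \subset Y /\
  (X <| Y \/
   (exists i : I, (sigma_i sigma i).-group (Y / gcore X Y))).

Definition sigma_subnormal (A G : {group gT}) : Prop :=
  exists (n : nat) (f : nat -> {group gT}),
    f 0 = A /\ f n = G /\ (forall k, k < n -> sigma_step (f k) (f k.+1)).

(* M-group: the subgroup lattice of M is modular *)
Definition modular_group (M : {set gT}) : Prop :=
  forall X Y Z : {group gT},
    X \subset M -> Y \subset M -> Z \subset M -> X \subset Z ->
    X <*> (Y :&: Z) = (X <*> Y) :&: Z.

Definition power_auts_on (G D : {set gT}) : Prop :=
  forall g, g \in G -> forall H : {group gT}, H \subset D -> H :^ g = H.

End Defs.

From mathcomp Require Import all_boot all_fingroup all_solvable.
Set Implicit Arguments. Unset Strict Implicit. Unset Printing Implicit Defensive.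
Local Open Scope group_scope.

(* Let A be a sigma_i-group, pi = sigma_i, and split the abelian group D as
   O_pi(D) x O_pi'(D).  A lies in a conjugate of a pi-Hall subgroup H, and H
   centralizes O_pi(D) because H = N x O_pi(D) with O_pi(D) abelian.  For
   O_pi'(D), one climbs the sigma-subnormal chain from A to G: A centralizes
   O_pi'(X) for every member X, since at each step the commutator
   [O_pi'(Y), A] lands in a normal pi'-subgroup of the previous member, and a
   coprime action that centralizes [L, A] centralizes L. *)

Section CoprimeAction.

Variable gT : finGroupType.
Implicit Types A C G H K L N X Y : {group gT}.

Lemma coprime_cent_commg A L :
    coprime #|L| #|A| -> solvable L -> A \subset 'N(L) ->
  A \subset 'C([~: L, A]) -> A \subset 'C(L).
Proof.
move=> coLA solL nLA cAK; set K := [~: L, A].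
have sKL : K \subset L by rewrite commg_subl.
have nKA : A \subset 'N(K) := commg_normr A L.
have coKA : coprime #|K| #|A| := coprimeSg sKL coLA.
have sKCLA : K \subset 'C_L(A) by rewrite subsetI sKL centsC.
have : L / K \subset 'C_L(A) / K.
  rewrite coprime_norm_quotient_cent ?(solvableS sKL) // subsetI subxx.
  exact: quotient_cents2r.
by rewrite quotientSGK ?commg_norml // => /subsetIP[_]; rewrite centsC.
Qed.

Lemma pgroup_quotient_sub pi C Y L :
    pi.-group (Y / C) -> pi^'.-group L -> L \subset Y -> L \subset 'N(C) ->
  L \subset C.
Proof.
move=> piYC pi'L sLY nCL; rewrite -quotient_sub1 //; apply/trivgP/card1_trivg.
exact: pnat_1 (pgroupS (quotientS C sLY) piYC) (quotient_pgroup C pi'L).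
Qed.

Lemma cent_pcoreN_step pi A C X Y :
    solvable Y -> pi.-group A -> A \subset X -> X \subset Y ->
    C <| Y -> C \subset X -> [~: 'O_pi^'(Y), A] \subset C ->
  A \subset 'C('O_pi^'(X)) -> A \subset 'C('O_pi^'(Y)).
Proof.
move=> solY piA sAX sXY nsCY sCX sLA_C cAX; set L := 'O_pi^'(Y).
have nLA : A \subset 'N(L) := subset_trans (subset_trans sAX sXY) (gFnorm _ _).
have coLA : coprime #|L| #|A|.
  by rewrite coprime_sym (pnat_coprime piA (pcore_pgroup _ _)).
apply: (coprime_cent_commg coLA (solvableS (pcore_sub _ _) solY) nLA).
have sLCX : L :&: C \subset X := subset_trans (subsetIr L C) sCX.
have nsLC_X : L :&: C <| X := normalS sLCX sXY (normalI (pcore_normal _ _) nsCY).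
have sLC_OX : L :&: C \subset 'O_pi^'(X).
  exact: pcore_max (pgroupS (subsetIl _ _) (pcore_pgroup _ _)) nsLC_X.
apply: subset_trans cAX (centS (subset_trans _ sLC_OX)).
by rewrite subsetI commg_subl nLA.
Qed.

Lemma sdprod_normal_abelian_cent N K H :
  N ><| K = H -> H \subset 'N(K) -> abelian K -> H \subset 'C(K).
Proof.
case/sdprodP=> _ <- nNK tiNK /mulGsubP[nKN _] cKK; rewrite mul_subG //.
by apply/commG1P/trivgP; rewrite -tiNK commg_subI // subsetI subxx.
Qed.

Lemma pHall_cent_pgroup pi G H K A :
    solvable G -> pi.-Hall(G) H -> G \subset 'N(K) -> H \subset 'C(K) ->
    A \subset G -> pi.-group A ->
  A \subset 'C(K).
Proof.
move=> solG hallH nKG cKH sAG piA.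
have [x Gx sAHx] := Hall_subJ solG hallH sAG piA.
by apply: subset_trans sAHx _; rewrite -(normsP nKG x Gx) centJ conjSg.
Qed.

End CoprimeAction.

Section SigmaSubnormal.

Variables (I : eqType) (sigma : nat -> I) (gT : finGroupType) (i : I).
Implicit Types A X Y G : {group gT}.

Let pi := sigma_i sigma i.

Lemma sigma_step_cent_pcoreN A X Y :
    solvable Y -> pi.-group A -> A \subset X -> sigma_step sigma X Y ->
  A \subset 'C('O_pi^'(X)) -> A \subset 'C('O_pi^'(Y)).
Proof.
move=> solY piA sAX [sXY stepXY] cAX; set L := 'O_pi^'(Y).
have nLY : Y \subset 'N(L) := gFnorm _ _.
have sLY : L \subset Y := pcore_sub _ _.
case: stepXY => [nsXY | [j sigmaYC]].
  apply: (cent_pcoreN_step solY piA sAX sXY nsXY (subxx X) _ cAX).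
  rewrite (subset_trans (commgS L sAX)) // commg_subr.
  exact: subset_trans sLY (normal_norm nsXY).
set C := gcore X Y.
have nsCY : C <| Y by rewrite /normal (subset_trans (gcore_sub X Y)) ?gcore_norm.
have nCL : L \subset 'N(C) := subset_trans sLY (normal_norm nsCY).
apply: (cent_pcoreN_step solY piA sAX sXY nsCY (gcore_sub X Y) _ cAX).
have [eq_ji | neq_ji] := eqVneq j i.
  rewrite eq_ji in sigmaYC.
  have sLC := pgroup_quotient_sub sigmaYC (pcore_pgroup _ _) sLY nCL.
  rewrite (subset_trans _ sLC) // commg_subl.
  exact: subset_trans (subset_trans sAX sXY) nLY.
have pi'YC : pi^'.-group (Y / C).
  by apply: sub_pgroup sigmaYC => p; rewrite !inE /= => /eqP->.
have sAY := subset_trans sAX sXY.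
have sAC : A \subset C.
  apply: (pgroup_quotient_sub pi'YC _ sAY); first by rewrite pgroupNK.
  exact: subset_trans sAY (normal_norm nsCY).
by rewrite (subset_trans (commgS L sAC)) // commg_subr.
Qed.

Lemma sigma_subnormal_cent_pcoreN A G :
    solvable G -> pi.-group A -> sigma_subnormal sigma A G ->
  A \subset 'C('O_pi^'(G)).
Proof.
move=> solG piA [n [f [f0 [fn stepf]]]].
have sfG k : k <= n -> f k \subset G.
  move=> le_kn; rewrite -fn.
  apply: (@homo_leq_in _ [pred m | m <= n] f (fun X Y => X \subset Y)
            _ _ _ _ k n le_kn (leqnn n) le_kn) => //.
  - by move=> Y X Z; apply: subset_trans.
  - by move=> m m' _ le_m'n k' /andP[_ /ltnW /leq_trans]; apply.
  - by move=> m _ lt_mn; case: (stepf m lt_mn).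
suff cAf k : k <= n -> A \subset f k /\ A \subset 'C('O_pi^'(f k)).
  by have [_] := cAf n (leqnn n); rewrite fn.
elim: k => [_ | k IHk lt_kn].
  rewrite f0; split => //.
  suff /trivgP-> : 'O_pi^'(A) \subset [1] by rewrite cents1.
  by rewrite -(TI_pcoreC pi A A) (pcore_pgroup_id piA) subsetI pcore_sub subxx.
have [sAfk cAfk] := IHk (ltnW lt_kn).
have step_k := stepf k lt_kn; have [sfk _] := step_k.
split; first exact: subset_trans sAfk sfk.
exact: sigma_step_cent_pcoreN (solvableS (sfG _ lt_kn) solG) piA sAfk step_k cAfk.
Qed.

End SigmaSubnormal.

Theorem lemma2p7 (I : eqType) (sigma : nat -> I) (gT : finGroupType)
    (G D M A : {group gT}) :
  solvable G ->
  D ><| M = G ->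
  abelian D -> Hall G D -> odd #|D| ->
  sigma_nilpotent sigma M -> modular_group M ->
  power_auts_on G D ->
  (forall i : I, exists H : {group gT},
      (sigma_i sigma i).-Hall(G) H /\
      exists N : {group gT}, N <| H /\ N ><| 'O_(sigma_i sigma i)(D) = H) ->
  sigma_primary sigma A -> sigma_subnormal sigma A G -> A \subset M ->
  D \subset 'C_G(A).
Proof.
move=> solG defG abD _ _ _ _ _ complO [i piA] snAG sAM.
set pi := sigma_i sigma i.
have [nsDG sMG _ _ _] := sdprod_context defG.
have sAG : A \subset G := subset_trans sAM sMG.
have nsDpi_G : 'O_pi(D) <| G := char_normal_trans (pcore_char pi D) nsDG.
have cA_Dpi' : A \subset 'C('O_pi^'(D)).
  apply: subset_trans (sigma_subnormal_cent_pcoreN solG piA snAG) (centS _).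
  exact: pcore_max (pcore_pgroup _ _) (char_normal_trans (pcore_char _ _) nsDG).
have cA_Dpi : A \subset 'C('O_pi(D)).
  have [H [hallH [N [_ defH]]]] := complO i.
  apply: (pHall_cent_pgroup solG hallH (normal_norm nsDpi_G) _ sAG piA).
  apply: sdprod_normal_abelian_cent defH _ (abelianS (pcore_sub _ _) abD).
  exact: subset_trans (pHall_sub hallH) (normal_norm nsDpi_G).
rewrite subsetI (normal_sub nsDG) -(dprodW (nilpotent_pcoreC pi (abelian_nil abD))).
by rewrite mul_subG // centsC.
Qed.
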